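(* Let $D$ be an orthogonal design of order $n$ and type $(s_1,\ldots,s_u)$ in variables $x_1,\ldots,x_u$ with $i$-th column $d_i$, let $W$ be a weighing matrix of order $n$ and weight $k$ with $i$-th column $w_i$, and put $C_i=w_id_i^\top$ for $i\in\{1,\ldots,n\}$. Let $L=(l(i,j))_{i,j=1}^n$ be a Latin square of order $n$ on the symbols $\{1,\ldots,n\}$. Then the $n^2\times n^2$ block matrix $\tilde D=(C_{l(i,j)})_{i,j=1}^n$ is an orthogonal design of order $n^2$ and type $(ks_1,\ldots,ks_u)$.
   Context: A weighing matrix of order $n$ and weight $k$ is an $n\times n$ $(0,1,-1)$-matrix $W$ with $WW^\top=kI_n$. An orthogonal design of order $n$ and type $(s_1,\ldots,s_u)$ in distinct commuting real indeterminates $x_1,\ldots,x_u$ is an $n\times n$ matrix $D$ with entries in $\{0,\pm x_1,\ldots,\pm x_u\}$ such that $DD^\top=(s_1x_1^2+\cdots+s_ux_u^2)I_n$. *)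

From HB Require Import structures.
From mathcomp Require Import all_boot all_order all_algebra.
From mathcomp Require Import mpoly.
Set Implicit Arguments. Unset Strict Implicit. Unset Printing Implicit Defensive.
Import Order.TTheory GRing.Theory Num.Theory.
Local Open Scope ring_scope.

Definition is_weighing (n k : nat) (W : 'M[int]_n) : Prop :=
  (forall i j, W i j = 0 \/ W i j = 1 \/ W i j = -1) /\
  W *m W^T = (k%:R : int)%:M.

Definition is_OD (u m : nat) (s : 'I_u -> nat) (D : 'M[{mpoly int[u]}]_m) : Prop :=
  (forall i j, D i j = 0 \/ exists v : 'I_u, D i j = 'X_v \/ D i j = - 'X_v) /\
  D *m D^T = (\sum_(v < u) (s v)%:R * 'X_v ^+ 2)%:M.

(* Latin square of order n on the symbols 'I_n (symbol l stands for l+1):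
   every symbol occurs exactly once in each row and in each column. *)
Definition is_latin (n : nat) (L : 'I_n -> 'I_n -> 'I_n) : Prop :=
  (forall i, bijective (L i)) /\ (forall j, bijective (fun i => L i j)).

Definition Cmat (u n : nat) (W : 'M[int]_n) (D : 'M[{mpoly int[u]}]_n) (i : 'I_n)
  : 'M[{mpoly int[u]}]_n :=
  col i (map_mx (fun z : int => z%:~R) W) *m (col i D)^T.

Lemma sum_const_nn (n : nat) : (\sum_(i < n) n = n * n)%N.
Proof. by rewrite big_const_ord iter_addn_0. Qed.

Definition Dtilde (u n : nat) (W : 'M[int]_n) (D : 'M[{mpoly int[u]}]_n)
  (L : 'I_n -> 'I_n -> 'I_n) : 'M[{mpoly int[u]}]_(n * n) :=
  castmx (sum_const_nn n, sum_const_nn n)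
    (\mxblock_(i < n, j < n) Cmat W D (L i j)).

(* Write d_a, w_a for the columns of D and W. Then
   C_a C_b^T = (d_a . d_b) w_a w_b^T, and block (i, j) of D~ D~^T is
   sum_m C_{l(i,m)} C_{l(j,m)}^T.  The columns of an orthogonal design are
   orthogonal as well (D D^T = f I forces D^T D = f I), so for i <> j every
   term vanishes, since l(i,m) <> l(j,m); for i = j the row of L runs over
   all symbols and the block is f sum_a w_a w_a^T = f W W^T = k f I. *)

From HB Require Import structures.
From mathcomp Require Import all_boot all_order all_algebra.
From mathcomp Require Import mpoly.
Set Implicit Arguments. Unset Strict Implicit. Unset Printing Implicit Defensive.
Import Order.TTheory GRing.Theory Num.Theory.
Local Open Scope ring_scope.

Lemma castmx_mulmx (R : pzSemiRingType) m1 n1 p1 m2 n2 p2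
    (em : m1 = m2) (en : n1 = n2) (ep : p1 = p2)
    (A : 'M[R]_(m1, n1)) (B : 'M[R]_(n1, p1)) :
  castmx (em, en) A *m castmx (en, ep) B = castmx (em, ep) (A *m B).
Proof. by case: m2 / em; case: n2 / en; case: p2 / ep; rewrite !castmx_id. Qed.

Lemma castmx_scalar (R : pzSemiRingType) m1 m2 (em : m1 = m2) (a : R) :
  castmx (em, em) a%:M = a%:M.
Proof. by case: m2 / em; rewrite castmx_id. Qed.

Lemma mulmx_tr_eq0 (R : realDomainType) m n (A : 'M[R]_(m, n)) :
  A *m A^T = 0 -> A = 0.
Proof.
move=> AAt0; apply/matrixP => i j; rewrite mxE.
have /eqP := congr1 (fun M : 'M[R]_m => M i i) AAt0.
rewrite !mxE psumr_eq0 => [/allP/(_ j (mem_index_enum _))/implyP/(_ isT)|t _].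
  by rewrite !mxE mulf_eq0 orbb => /eqP.
by rewrite !mxE -expr2 sqr_ge0.
Qed.

Lemma mulmx_scalarC (R : idomainType) n (A B : 'M[R]_n) (c : R) :
  c != 0 -> A *m B = c%:M -> B *m A = c%:M.
Proof.
move=> c_neq0 AB.
have detA_neq0 : \det A != 0.
  apply: contra_neq c_neq0 => detA0.
  have := congr1 determinant AB; rewrite det_mulmx det_scalar detA0 mul0r.
  by move/esym/eqP; rewrite expf_eq0 => /andP[_ /eqP].
have adjA : \det A *: B = c *: \adj A.
  by rewrite -mul_scalar_mx -mul_adj_mx -mulmxA AB mul_mx_scalar.
apply/matrixP => i j; apply: (mulfI detA_neq0).
have := congr1 (fun M : 'M[R]_n => (M *m A) i j) adjA.
rewrite -!scalemxAl mul_adj_mx !mxE => ->.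
by rewrite !mulrnAr mulrC.
Qed.

Section SignedVariables.
Variable u : nat.

Definition signed_var (x : {mpoly int[u]}) :=
  x = 0 \/ exists v : 'I_u, x = 'X_v \/ x = - 'X_v.

Lemma signed_var_intrM (z : int) (x : {mpoly int[u]}) :
  z = 0 \/ z = 1 \/ z = -1 -> signed_var x -> signed_var (z%:~R * x).
Proof.
case=> [->|[->|->]] sx; first by left; rewrite mul0r.
  by rewrite mul1r.
rewrite mulN1r; case: sx => [->|[v [->|->]]]; first by left; rewrite oppr0.
  by right; exists v; right.
by right; exists v; left; rewrite opprK.
Qed.

Lemma signed_var_eval1_eq0 (x : {mpoly int[u]}) :
  signed_var x -> x.@[fun _ => 1] = 0 -> x = 0.
Proof.
case=> [//|[v [->|->]]]; rewrite ?mevalN mevalXU => /eqP;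
  by rewrite ?oppr_eq0 oner_eq0.
Qed.

Lemma signed_mx_mul_tr_eq0 m n (D : 'M[{mpoly int[u]}]_(m, n)) :
  (forall i j, signed_var (D i j)) -> D *m D^T = 0 -> D = 0.
Proof.
move=> sD DDt0; pose ev := meval (fun _ : 'I_u => 1 : int).
have /mulmx_tr_eq0 /matrixP evD0 : map_mx ev D *m (map_mx ev D)^T = 0.
  by rewrite map_trmx -map_mxM DDt0 map_mx0.
apply/matrixP => i j; rewrite mxE; apply: signed_var_eval1_eq0 => //.
by have := evD0 i j; rewrite !mxE.
Qed.

(* For f = 0 the adjugate argument of mulmx_scalarC is unavailable; instead,
   evaluating at 1 makes D D^T = 0 a sum of integer squares, forcing D = 0. *)
Lemma signed_mx_trC n (D : 'M[{mpoly int[u]}]_n) (f : {mpoly int[u]}) :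
  (forall i j, signed_var (D i j)) -> D *m D^T = f%:M -> D^T *m D = f%:M.
Proof.
move=> sD DDt; have [f0|] := eqVneq f 0; last by move/mulmx_scalarC; apply.
move: DDt; rewrite f0 raddf0 => /(signed_mx_mul_tr_eq0 sD) ->.
by rewrite trmx0 mul0mx.
Qed.

End SignedVariables.

Section LatinBlocks.
Variables (R : comPzRingType) (n : nat) (V E : 'M[R]_n).

Definition col_outer (a : 'I_n) : 'M[R]_n := col a V *m (col a E)^T.

Lemma col_outer_mul_tr a b :
  col_outer a *m (col_outer b)^T = (E^T *m E) a b *: (col a V *m (col b V)^T).
Proof.
rewrite /col_outer trmx_mul trmxK mulmxA -(mulmxA _ _ (col b E)).
have -> : (col a E)^T *m col b E = ((E^T *m E) a b)%:M.
  apply/matrixP => i j; rewrite !ord1 !mxE.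
  by apply: eq_bigr => t _; rewrite !mxE.
by rewrite mul_mx_scalar -scalemxAl.
Qed.

Lemma sum_col_mul_tr : \sum_a col a V *m (col a V)^T = V *m V^T.
Proof.
apply/matrixP => r c; rewrite summxE !mxE.
by apply: eq_bigr => a _; rewrite !mxE big_ord1 !mxE.
Qed.

Lemma latin_mxblock_mul_tr (L : 'I_n -> 'I_n -> 'I_n) (c d : R) :
    is_latin L -> V *m V^T = c%:M -> E^T *m E = d%:M ->
  let B := \mxblock_(i < n, j < n) col_outer (L i j) in B *m B^T = (d * c)%:M.
Proof.
move=> [Lrow Lcol] VVt EtE; rewrite /= tr_mxblock mul_mxblock -mxdiagZ.
apply: eq_mxblock => i j; rewrite conform_mx_id.
under eq_bigr do rewrite col_outer_mul_tr EtE mxE.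
have [<-|ij] := eqVneq i j.
  under eq_bigr do rewrite eqxx mulr1n.
  have row_sum : \sum_m col (L i m) V *m (col (L i m) V)^T = V *m V^T.
    by rewrite -sum_col_mul_tr; exact/esym/(reindex_inj (bij_inj (Lrow i))).
  by rewrite -scaler_sumr row_sum VVt scale_scalar_mx.
rewrite big1 // => m _.
have /negPf -> : L i m != L j m by apply: contra_neq ij => /(bij_inj (Lcol m)).
by rewrite mulr0n scale0r.
Qed.

End LatinBlocks.

Lemma Cmat_col_outer u n (W : 'M[int]_n) (D : 'M[{mpoly int[u]}]_n) a :
  Cmat W D a = col_outer (map_mx intr W) D a.
Proof. by []. Qed.

Lemma Dtilde_signed u n (W : 'M[int]_n) (D : 'M[{mpoly int[u]}]_n) L :
    (forall i j, W i j = 0 \/ W i j = 1 \/ W i j = -1) ->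
    (forall i j, signed_var (D i j)) ->
  forall p q, signed_var (Dtilde W D L p q).
Proof.
move=> sW sD p q; rewrite /Dtilde castmxE !mxE /Cmat big_ord1 !mxE.
exact: signed_var_intrM.
Qed.

Theorem lemma3p10 (u n k : nat) (s : 'I_u -> nat)
  (D : 'M[{mpoly int[u]}]_n) (W : 'M[int]_n) (L : 'I_n -> 'I_n -> 'I_n) :
  is_OD s D -> is_weighing k W -> is_latin L ->
  is_OD (fun v => (k * s v)%N) (Dtilde W D L).
Proof.
move=> [sD DDt] [sW WWt] latinL; split; first exact: Dtilde_signed.
have WWt_poly : map_mx intr W *m (map_mx intr W)^T = (k%:R : {mpoly int[u]})%:M.
  by rewrite map_trmx -map_mxM WWt map_scalar_mx rmorph_nat.
have DtD := signed_mx_trC sD DDt.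
rewrite /Dtilde trmx_cast castmx_mulmx -(castmx_scalar (sum_const_nn n)).
congr castmx; under eq_mxblock do rewrite Cmat_col_outer.
rewrite (latin_mxblock_mul_tr latinL WWt_poly DtD) mulr_suml.
by congr (_%:M); apply: eq_bigr => v _; rewrite natrM mulrC mulrA.
Qed.
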